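(* Let $A,B$ be persistence diagrams with $A$ nonempty, let $d_0=\min\{d_\infty(A,B),d_\infty(D_0,B)\}$, $c_{\min}=\max\{0,(\mathrm{pers}(B)-d_0)/\mathrm{pers}(A)\}$, $c_{\max}=(\mathrm{pers}(B)+d_0)/\mathrm{pers}(A)$, let $N\ge1$, and let $t_i=c_{\min}+\tfrac{i}{N}(c_{\max}-c_{\min})$ for $i=0,\dots,N$. Set $\widehat{d_D}(A,B)=\min_{0\le i\le N}d_\infty(t_iA,B)$. Then $$0\le \widehat{d_D}(A,B)-\overline{d_D}(A,B)\le \frac{2d_0\,\mathrm{bd}(A)}{N\,\mathrm{pers}(A)}.$$
   Context: A persistence diagram is a finite multiset of points $a=(a_x,a_y)$ with $0\le a_x<a_y<\infty$ together with the diagonal $\Delta$ of infinite multiplicity; $D_0$ is the empty diagram. $d_\infty$ is the bottleneck distance. $cA=\{(ca_x,ca_y)\}$ for $c>0$ and $0A=D_0$. $\overline{d_D}(A,B)=\inf_{c\ge0}d_\infty(cA,B)$. $\mathrm{pers}(a)=(a_y-a_x)/2$, $\mathrm{pers}(A)=\max_{a\in A}\mathrm{pers}(a)$, and $\mathrm{bd}(A)=\max_{a\in A}\|a\|_\infty=\max_{a\in A}a_y$. *)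

From HB Require Import structures.
From mathcomp Require Import all_boot all_order all_algebra.
From mathcomp Require Import all_classical all_reals.
Set Implicit Arguments. Unset Strict Implicit. Unset Printing Implicit Defensive.
Import Order.TTheory GRing.Theory Num.Theory.
Local Open Scope ring_scope.
Local Open Scope classical_set_scope.

Section PD.
Variable R : realType.

Definition pt := (R * R)%type.

(* A persistence diagram: a finite multiset (list) of off-diagonal points with
   0 <= a_x < a_y; the diagonal (infinite multiplicity) is implicit. *)
Definition is_pd (A : seq pt) : bool := all (fun a => (0 <= a.1) && (a.1 < a.2)) A.

Definition D0 : seq pt := [::].

Definition linf (a b : pt) : R := Num.max `|a.1 - b.1| `|a.2 - b.2|.

Definition pers_pt (a : pt) : R := (a.2 - a.1) / 2.

Definition pers (A : seq pt) : R := \big[Num.max/0]_(a <- A) pers_pt a.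
Definition bd (A : seq pt) : R := \big[Num.max/0]_(a <- A) a.2.

Definition scale (c : R) (A : seq pt) : seq pt :=
  if c == 0 then D0 else map (fun a => (c * a.1, c * a.2)) A.

(* partial matchings between the off-diagonal points of A and of B;
   unmatched points are matched to the diagonal (cost pers = l_inf distance
   to the diagonal). *)
Definition partial_inj (n m : nat) (f : 'I_n -> option 'I_m) : Prop :=
  forall i i' j, f i = Some j -> f i' = Some j -> i = i'.

Definition matching_cost (A B : seq pt)
    (f : 'I_(size A) -> option 'I_(size B)) : R :=
  Num.max
    (\big[Num.max/0]_(i < size A)
        match f i with
        | Some j => linf (nth (0,0) A i) (nth (0,0) B j)
        | None => pers_pt (nth (0,0) A i)
        end)
    (\big[Num.max/0]_(j < size B | [forall i, f i != Some j])
        pers_pt (nth (0,0) B j)).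

Definition d_inf (A B : seq pt) : R :=
  inf [set matching_cost f | f in [set f : 'I_(size A) -> option 'I_(size B) |
                                       partial_inj f]].

Definition dbar (A B : seq pt) : R :=
  inf [set d_inf (scale c A) B | c in [set c : R | 0 <= c]].

Definition d0 (A B : seq pt) : R := Num.min (d_inf A B) (d_inf D0 B).
Definition cmin (A B : seq pt) : R := Num.max 0 ((pers B - d0 A B) / pers A).
Definition cmax (A B : seq pt) : R := (pers B + d0 A B) / pers A.
Definition tgrid (A B : seq pt) (N i : nat) : R :=
  cmin A B + (i%:R / N%:R) * (cmax A B - cmin A B).
Definition dhat (A B : seq pt) (N : nat) : R :=
  \big[Num.min/d_inf (scale (tgrid A B N 0) A) B]_(i < N.+1)
     d_inf (scale (tgrid A B N i) A) B.

End PD.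

(* Write pA = pers A and d = d0 A B.
   (1) The bottleneck distance is an infimum of matching costs; every matching
       cost dominates |pers X - pers B|, and the empty matching costs
       max (pers X) (pers B).  Hence d_inf D0 B = pers B and pers is
       1-Lipschitz for d_inf.
   (2) Moving every point of X by at most e moves d_inf X B by at most e; for
       scalings this gives |d_inf (cA) B - d_inf (c'A) B| <= |c - c'| bd A.
   (3) Outside [cmin, cmax] we have |c pA - pers B| > d, so d_inf (cA) B > d
       by (1); inside, some grid point t_i lies within
       (cmax - cmin)/N <= 2d/(N pA) of c, so dhat <= d_inf (cA) B + err by (2),
       where err = 2 d bd(A) / (N pA).
   (4) d is attained at c = 1 (if d = d_inf A B) or c = 0 (if d = pers B),
       both in [cmin, cmax]; so dhat <= d + err, which handles the outside
       case.  Thus dhat - err is a lower bound of every d_inf (cA) B, c >= 0,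
       while dhat, a minimum over scales c >= 0, is an upper bound of dbar. *)

From HB Require Import structures.
From mathcomp Require Import all_boot all_order all_algebra.
From mathcomp Require Import all_classical all_reals.
From mathcomp Require Import lra ring.
Set Implicit Arguments. Unset Strict Implicit. Unset Printing Implicit Defensive.
Import Order.TTheory GRing.Theory Num.Theory.
Local Open Scope ring_scope.
Local Open Scope classical_set_scope.

Section Points.
Variable R : realType.
Implicit Types a b c : pt R.

Lemma linf_sym a b : linf a b = linf b a.
Proof. by rewrite /linf (distrC a.1) (distrC a.2). Qed.

Lemma linf_tri a b c : linf a c <= linf a b + linf b c.
Proof.
rewrite /linf ge_max; apply/andP; split.
  by apply: le_trans (ler_distD b.1 _ _) _; apply: lerD; rewrite le_max lexx.
by apply: le_trans (ler_distD b.2 _ _) _; apply: lerD; rewrite le_max lexx ?orbT.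
Qed.

Lemma pers_pt_lip a b : pers_pt a <= pers_pt b + linf a b.
Proof.
rewrite /pers_pt /linf.
have h1 : a.2 - b.2 <= `|a.2 - b.2| by exact: ler_norm.
have h2 : - (a.1 - b.1) <= `|a.1 - b.1| by rewrite -normrN ler_norm.
have h3 : `|a.1 - b.1| <= Num.max `|a.1 - b.1| `|a.2 - b.2| by rewrite le_max lexx.
have h4 : `|a.2 - b.2| <= Num.max `|a.1 - b.1| `|a.2 - b.2|.
  by rewrite le_max lexx orbT.
lra.
Qed.

End Points.

Section Diagrams.
Variable R : realType.
Implicit Types X A B : seq (pt R).

Lemma pers_nth X (i : nat) : (i < size X)%N -> pers_pt (nth (0,0) X i) <= pers X.
Proof. by move=> h; apply: le_bigmax_seq => //; exact: mem_nth. Qed.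

Lemma pers_ge0 X : 0 <= pers X.
Proof. exact: bigmax_ge_id. Qed.

Lemma pers_D0 : pers (D0 R) = 0.
Proof. by rewrite /pers big_nil. Qed.

(* pers as a maximum over indices, the form in which matching costs are written. *)
Lemma pers_ord X : pers X = \big[Num.max/0]_(i < size X) pers_pt (nth (0,0) X i).
Proof. by rewrite /pers (big_nth (0,0)) big_mkord. Qed.

Lemma pd_nth A (k : nat) : is_pd A -> (k < size A)%N ->
  0 <= (nth (0,0) A k).1 /\ (nth (0,0) A k).1 < (nth (0,0) A k).2.
Proof. by move=> /allP h hk; have /andP[] := h _ (mem_nth (0,0) hk). Qed.

Lemma bd_nth A (k : nat) : (k < size A)%N -> (nth (0,0) A k).2 <= bd A.
Proof. by move=> hk; apply: le_bigmax_seq => //; exact: mem_nth. Qed.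

Lemma bd_ge0 A : 0 <= bd A.
Proof. exact: bigmax_ge_id. Qed.

Lemma pers_le_bd A : is_pd A -> pers A <= bd A.
Proof.
move=> hA; rewrite /pers big_seq; apply: bigmax_le => [|a ha]; first exact: bd_ge0.
have /andP[h1 h2] := allP hA a ha; have hb : a.2 <= bd A by exact: le_bigmax_seq.
by rewrite /pers_pt; lra.
Qed.

Lemma pers_gt0 A : is_pd A -> A != [::] -> 0 < pers A.
Proof.
case: A => [|a A] // hA _; have [h1 h2] := pd_nth hA (ltn0Sn (size A)).
have := pers_nth (X := a :: A) (ltn0Sn (size A)); rewrite /pers_pt /=.
move: h1 h2 => /= h1 h2; lra.
Qed.

End Diagrams.

Section Matchings.
Variable R : realType.
Implicit Types X B : seq (pt R).

Definition matching X B := 'I_(size X) -> option 'I_(size B).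

Lemma cost_ge0 X B (f : matching X B) : 0 <= matching_cost f.
Proof. by rewrite /matching_cost le_max bigmax_ge_id. Qed.

Lemma cost_termA X B (f : matching X B) (i : 'I_(size X)) :
  match f i with
  | Some j => linf (nth (0,0) X i) (nth (0,0) B j)
  | None => pers_pt (nth (0,0) X i) end <= matching_cost f.
Proof.
rewrite /matching_cost le_max; apply/orP; left.
exact: (le_bigmax _ (fun i : 'I_(size X) => match f i with
  | Some j => linf (nth (0,0) X i) (nth (0,0) B j)
  | None => pers_pt (nth (0,0) X i) end)).
Qed.

Lemma cost_termB X B (f : matching X B) (j : 'I_(size B)) :
  [forall i, f i != Some j] -> pers_pt (nth (0,0) B j) <= matching_cost f.
Proof.
move=> h; rewrite /matching_cost le_max; apply/orP; right.
exact: (le_bigmax_cond _ (fun j : 'I_(size B) => pers_pt (nth (0,0) B j)) h).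
Qed.

Lemma cost_ge_persB X B (f : matching X B) : pers B - pers X <= matching_cost f.
Proof.
suff: pers B <= pers X + matching_cost f by lra.
rewrite [pers B]pers_ord; apply: bigmax_le.
  by have := pers_ge0 X; have := cost_ge0 f; lra.
move=> j _; case: (boolP [forall i, f i != Some j]) => [unmatched|].
  by have := cost_termB unmatched; have := pers_ge0 X; lra.
move/forallPn=> [i]; rewrite negbK => /eqP fi.
have := cost_termA f i; rewrite fi.
have := pers_pt_lip (nth (0,0) B j) (nth (0,0) X i).
by have := pers_nth (ltn_ord i); rewrite linf_sym; lra.
Qed.

Lemma cost_ge_persX X B (f : matching X B) : pers X - pers B <= matching_cost f.
Proof.
suff: pers X <= pers B + matching_cost f by lra.
rewrite [pers X]pers_ord; apply: bigmax_le.
  by have := pers_ge0 B; have := cost_ge0 f; lra.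
move=> i _; have := cost_termA f i; case: (f i) => [j|] h.
  have := pers_pt_lip (nth (0,0) X i) (nth (0,0) B j).
  by have := pers_nth (ltn_ord j); lra.
by have := pers_ge0 B; lra.
Qed.

Lemma dinf_le X B (f : matching X B) : partial_inj f -> d_inf X B <= matching_cost f.
Proof.
move=> finj; apply: ge_inf; last by exists f.
by exists 0 => x [g _ <-]; exact: cost_ge0.
Qed.

Lemma dinf_glb X B (x : R) :
  (forall f : matching X B, partial_inj f -> x <= matching_cost f) -> x <= d_inf X B.
Proof.
move=> lb; apply: lb_le_inf; last by move=> y [f finj <-]; exact: lb.
by exists (matching_cost (fun _ : 'I_(size X) => None : option 'I_(size B))), (fun _ => None).
Qed.

Lemma dinf_ge0 X B : 0 <= d_inf X B.
Proof. by apply: dinf_glb => f _; exact: cost_ge0. Qed.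

Lemma dinf_ge_pers X B : `|pers X - pers B| <= d_inf X B.
Proof.
rewrite ler_norml lerNl opprB; apply/andP; split; apply: dinf_glb => f _.
  exact: cost_ge_persB.
exact: cost_ge_persX.
Qed.

Lemma dinf_le_unmatched X B : d_inf X B <= Num.max (pers X) (pers B).
Proof.
have hinj : partial_inj (fun _ : 'I_(size X) => None : option 'I_(size B)) by [].
apply: le_trans (dinf_le hinj) _; rewrite /matching_cost ge_max; apply/andP; split.
  apply: bigmax_le; first by rewrite le_max pers_ge0.
  by move=> i _ /=; rewrite le_max pers_nth.
apply: bigmax_le; first by rewrite le_max pers_ge0.
by move=> j _ /=; rewrite le_max pers_nth ?orbT.
Qed.

Lemma dinf_D0 B : d_inf (D0 R) B = pers B.
Proof.
apply/le_anti/andP; split.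
  by apply: le_trans (dinf_le_unmatched _ _) _; rewrite pers_D0 ge_max pers_ge0 lexx.
by have := dinf_ge_pers (D0 R) B; rewrite pers_D0 sub0r normrN ger0_norm ?pers_ge0.
Qed.

Lemma dinf_perturb X X' B (e : R) : size X' = size X -> 0 <= e ->
  (forall k, (k < size X)%N -> linf (nth (0,0) X' k) (nth (0,0) X k) <= e) ->
  d_inf X' B <= d_inf X B + e.
Proof.
move=> hs he close; suff: d_inf X' B - e <= d_inf X B by lra.
apply: dinf_glb => f finj.
pose f' : matching X' B := fun i => f (cast_ord hs i).
have f'inj : partial_inj f'.
  by move=> i i' j e1 e2; apply: (cast_ord_inj (eq_n:=hs)); exact: finj e1 e2.
suff: matching_cost f' <= matching_cost f + e by have := dinf_le f'inj; lra.
rewrite {1}/matching_cost ge_max; apply/andP; split.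
  apply: bigmax_le; first by have := cost_ge0 f; lra.
  move=> i _; rewrite /f'; set i0 := cast_ord hs i.
  have -> : nth (0,0) X' i = nth (0,0) X' i0 by [].
  have hi := close i0 (ltn_ord i0).
  have := pers_pt_lip (nth (0,0) X' i0) (nth (0,0) X i0).
  have := cost_termA f i0; case: (f i0) => [j|] h.
    by have := linf_tri (nth (0,0) X' i0) (nth (0,0) X i0) (nth (0,0) B j); lra.
  lra.
apply: bigmax_le; first by have := cost_ge0 f; lra.
move=> j /forallP unmatched'.
have unmatched : [forall i, f i != Some j].
  by apply/forallP => i; have := unmatched' (cast_ord (esym hs) i); rewrite /f' cast_ordKV.
by have := cost_termB unmatched; lra.
Qed.

End Matchings.

Section Scaling.
Variable R : realType.
Implicit Types A B : seq (pt R).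

Lemma scale1 A : scale 1 A = A.
Proof.
rewrite /scale oner_eq0; elim: A => //= -[x y] A ->.
by rewrite !mul1r.
Qed.

Lemma pers_scale (c : R) A : 0 <= c -> pers (scale c A) = c * pers A.
Proof.
move=> hc; rewrite /scale; case: eqP => [->|_]; first by rewrite pers_D0 mul0r.
rewrite /pers big_map; elim: A => [|a A IH]; first by rewrite !big_nil mulr0.
by rewrite !big_cons IH maxr_pMr //; congr (Num.max _ _); rewrite /pers_pt /=; ring.
Qed.

Lemma dinf_near_D0 X B : d_inf X B <= d_inf (D0 R) B + pers X /\
                         d_inf (D0 R) B <= d_inf X B + pers X.
Proof.
rewrite dinf_D0; have /ler_normlP[h1 _] := dinf_ge_pers X B.
have := dinf_le_unmatched X B; rewrite le_max => /orP[] h2.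
  by have := pers_ge0 B; split; lra.
by have := pers_ge0 X; split; lra.
Qed.

Lemma dinf_scale_lip (c c' : R) A B : 0 <= c -> 0 <= c' -> is_pd A ->
  d_inf (scale c' A) B <= d_inf (scale c A) B + `|c - c'| * bd A.
Proof.
move=> hc hc' hA.
have pers_le (s : R) : 0 <= s -> pers (scale s A) <= s * bd A.
  by move=> hs; rewrite pers_scale // ler_wpM2l // pers_le_bd.
have scale0 : scale 0 A = D0 R by rewrite /scale eqxx.
have [->|cn0] := eqVneq c 0; have [->|c'n0] := eqVneq c' 0.
- by rewrite subrr normr0 mul0r addr0.
- have [h _] := dinf_near_D0 (scale c' A) B; have := pers_le c' hc'.
  by rewrite scale0 sub0r normrN ger0_norm //; lra.
- have [_ h] := dinf_near_D0 (scale c A) B; have := pers_le c hc.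
  by rewrite scale0 subr0 ger0_norm //; lra.
have size_scale (s : R) : s != 0 -> size (scale s A) = size A.
  by move=> hs; rewrite /scale (negbTE hs) size_map.
apply: dinf_perturb; rewrite ?size_scale ?mulr_ge0 ?bd_ge0 // => k hk.
rewrite /scale (negbTE cn0) (negbTE c'n0) !(nth_map (0,0)) // /linf /=.
have [h1 h2] := pd_nth hA hk; have hb := bd_nth hk.
rewrite -!mulrBl !normrM !(distrC c') (ger0_norm h1) (ger0_norm (le_trans h1 (ltW h2))).
by rewrite ge_max !ler_wpM2l //; lra.
Qed.

End Scaling.

Section Grid.
Variable R : realType.

Lemma grid_mesh (lo hi c : R) (N : nat) : (0 < N)%N -> lo <= c -> c <= hi ->
  exists i : 'I_N.+1, `|lo + i%:R / N%:R * (hi - lo) - c| <= (hi - lo) / N%:R.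
Proof.
move=> hN h1 h2; have hN' : (N%:R : R) != 0 by rewrite pnatr_eq0 -lt0n.
pose t (k : nat) := lo + k%:R / N%:R * (hi - lo).
have tS k : t k.+1 = t k + (hi - lo) / N%:R by rewrite /t mulrS; field.
suff: forall k, (k <= N)%N -> c <= t k ->
  exists i : 'I_N.+1, `|t i - c| <= (hi - lo) / N%:R.
  by move=> near; apply: (near N) => //; rewrite /t divff // mul1r; lra.
elim=> [|k IH] hk hc.
  exists ord0; rewrite /t /= mul0r mul0r addr0 in hc *.
  have -> : lo = c by lra.
  by rewrite subrr normr0 divr_ge0 ?ler0n //; lra.
have [hck|hck] := lerP c (t k); first exact: IH (ltnW hk) hck.
exists (Ordinal (hk : (k.+1 < N.+1)%N)) => /=.
by rewrite ger0_norm; rewrite tS in hc *; lra.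
Qed.

End Grid.

Section Discretisation.
Variables (R : realType) (A B : seq (pt R)) (N : nat).
Hypotheses (hA : is_pd A) (hAn : A != [::]) (hN : (1 <= N)%N).

Local Notation pA := (pers A).
Local Notation d := (d0 A B).
Local Notation err := (2 * d0 A B * bd A / (N%:R * pers A)).

Lemma d0_ge0 : 0 <= d.
Proof. by rewrite /d0 le_min !dinf_ge0. Qed.

Lemma cmin_ge0 : 0 <= cmin A B.
Proof. by rewrite /cmin le_max lexx. Qed.

Lemma cmin_le_cmax : cmin A B <= cmax A B.
Proof.
have hpA := pers_gt0 hA hAn; have hd := d0_ge0; have hB := pers_ge0 B.
rewrite /cmin /cmax ge_max; apply/andP; split.
  by rewrite divr_ge0 //; lra.
by rewrite ler_pM2r ?invr_gt0 //; lra.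
Qed.

Lemma tgrid_ge0 (i : nat) : 0 <= tgrid A B N i.
Proof.
have hfrac : 0 <= i%:R / N%:R :> R by rewrite divr_ge0 ?ler0n.
have hwidth : 0 <= cmax A B - cmin A B by rewrite subr_ge0 cmin_le_cmax.
by rewrite /tgrid; have := mulr_ge0 hfrac hwidth; have := cmin_ge0; lra.
Qed.

(* Scales outside [cmin, cmax] are worse than d, by the pers bound. *)
Lemma dinf_scale_outside (c : R) : 0 <= c -> c < cmin A B \/ cmax A B < c ->
  d < d_inf (scale c A) B.
Proof.
move=> hc out; have hpA := pers_gt0 hA hAn.
have := dinf_ge_pers (scale c A) B; rewrite pers_scale // ler_norml => /andP[h1 h2].
case: out => [|h]; last by move: h; rewrite /cmax ltr_pdivrMr //; lra.
by rewrite /cmin lt_max ltNge hc /= ltr_pdivlMr //; lra.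
Qed.

Lemma dhat_le_inside (c : R) : cmin A B <= c -> c <= cmax A B ->
  dhat A B N <= d_inf (scale c A) B + err.
Proof.
move=> h1 h2; have hpA := pers_gt0 hA hAn; have hN0 : (0 : R) < N%:R by rewrite ltr0n.
have [i hi] := grid_mesh hN h1 h2.
rewrite /dhat; apply: le_trans (bigmin_le _ i _) _.
apply: le_trans (dinf_scale_lip B (le_trans cmin_ge0 h1) (tgrid_ge0 i) hA) _.
rewrite lerD2l distrC; apply: le_trans (ler_wpM2r (bd_ge0 A) hi) _.
have mesh : cmax A B - cmin A B <= 2 * d / pA.
  have : (pers B - d) / pA <= cmin A B by rewrite /cmin le_max lexx orbT.
  have -> : 2 * d / pA = cmax A B - (pers B - d) / pA by rewrite /cmax; field; lra.
  lra.
have -> : err = 2 * d / pA / N%:R * bd A by field; rewrite !gt_eqF.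
by rewrite ler_wpM2r ?bd_ge0 // ler_pM2r ?invr_gt0.
Qed.

(* d0 is the bottleneck distance to B of an admissible scaling (c = 1 or 0). *)
Lemma d0_attained : exists2 c, cmin A B <= c <= cmax A B & d_inf (scale c A) B = d.
Proof.
have hpA := pers_gt0 hA hAn; have := cmin_le_cmax.
have [h|h] := lerP (d_inf A B) (pers B).
  have hd : d = d_inf A B by rewrite /d0 dinf_D0 min_l.
  exists 1; last by rewrite scale1.
  have := dinf_ge_pers A B; rewrite ler_norml => /andP[h1 h2].
  rewrite /cmin /cmax ge_max ler01 ler_pdivrMr // ler_pdivlMr // !mul1r; lra.
have hd : d = pers B by rewrite /d0 dinf_D0 min_r // ltW.
have hcmin : cmin A B = 0 by rewrite /cmin hd subrr mul0r maxxx.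
exists 0; first by apply/andP; split; rewrite -hcmin.
by rewrite /scale eqxx dinf_D0 hd.
Qed.

Lemma dhat_le_all (c : R) : 0 <= c -> dhat A B N <= d_inf (scale c A) B + err.
Proof.
move=> hc; have [/andP[h1 h2]|out] := boolP (cmin A B <= c <= cmax A B).
  exact: dhat_le_inside.
have [c0 /andP[h1 h2] hc0] := d0_attained.
have {}out : c < cmin A B \/ cmax A B < c.
  by move: out; rewrite negb_and -!ltNge => /orP.
have := dinf_scale_outside hc out; have := dhat_le_inside h1 h2.
by rewrite hc0; lra.
Qed.

Lemma dbar_le_dhat : dbar A B <= dhat A B N.
Proof.
have dbar_le (c : R) : 0 <= c -> dbar A B <= d_inf (scale c A) B.
  move=> hc; apply: ge_inf; last by exists c.
  by exists 0 => x [c' _ <-]; exact: dinf_ge0.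
by rewrite /dhat; apply: le_bigmin => [|i _]; apply/dbar_le/tgrid_ge0.
Qed.

Lemma dhat_sub_err_le_dbar : dhat A B N - err <= dbar A B.
Proof.
apply: lb_le_inf; first by exists (d_inf (scale 0 A) B), 0 => //=.
by move=> x [c hc <-]; have := dhat_le_all hc; lra.
Qed.

End Discretisation.

Unset Implicit Arguments.

Theorem mainTheorem5 (R : realType) (A B : seq (pt R)) (N : nat) :
  is_pd A -> is_pd B -> A != [::] -> (1 <= N)%N ->
  0 <= dhat A B N - dbar A B /\
  dhat A B N - dbar A B <= 2 * d0 A B * bd A / (N%:R * pers A).
Proof.
move=> hA _ hAn hN; split.
  by rewrite subr_ge0 dbar_le_dhat.
by rewrite lerBlDr -lerBlDl; exact: dhat_sub_err_le_dbar.
Qed.
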